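(* For all $\lambda\mu\mathrm{T}$-terms $t_1,t_2$: if $t_1=t_2$ in $\lambda\mu\mathrm{T}$, then $t_1^*=t_2^*$ in Gödel's T.
   Context: The calculus $\lambda\mu\mathrm{T}$. Types: $\rho ::= \mathbb{N} \mid \sigma\to\tau$. Over infinite sets of $\lambda$-variables $x,y,\dots$ and $\mu$-variables $\alpha,\beta,\gamma,\dots$, terms and commands are mutually defined by $t,r,s ::= x \mid \lambda x{:}\rho.r \mid t\,s \mid \mu\alpha{:}\rho.c \mid 0 \mid \mathsf{S}\,t \mid \mathsf{nrec}_\rho\ r\ s\ t$ and $c ::= [\alpha]t$ (type annotations often omitted). $FCV(t)$ denotes the free $\mu$-variables; $t[x:=r]$ is capture-avoiding substitution. Numerals: $\underline{n} := \mathsf{S}^n 0$. Contexts: $E ::= \Box \mid E\,t \mid \mathsf{S}\,E \mid \mathsf{nrec}\ r\ s\ E$; $E[u]$ fills the hole with $u$. Structural substitution $t[\alpha:=\beta E]$ is defined homomorphically on all constructs (capture-avoiding) except $([\alpha]u)[\alpha:=\beta E] := [\beta]E[u[\alpha:=\beta E]]$ (and $([\gamma]u)[\alpha:=\beta E]:=[\gamma](u[\alpha:=\beta E])$ for $\gamma\neq\alpha$). Reduction $\to$ of $\lambda\mu\mathrm{T}$ is the compatible closure (on terms and commands) of: ($\beta$) $(\lambda x.t)r\to t[x:=r]$; ($\mu\mathsf{S}$) $\mathsf{S}(\mu\alpha.c)\to\mu\alpha.c[\alpha:=\alpha(\mathsf{S}\,\Box)]$; ($\mu R$) $(\mu\alpha.c)s\to\mu\alpha.c[\alpha:=\alpha(\Box\,s)]$;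 ($\mu\eta$) $\mu\alpha.[\alpha]t\to t$ if $\alpha\notin FCV(t)$; ($\mu i$) $[\alpha]\mu\beta.c\to c[\beta:=\alpha\,\Box]$; ($0$) $\mathsf{nrec}\ r\ s\ 0\to r$; ($\mathsf{S}$) $\mathsf{nrec}\ r\ s\ (\mathsf{S}\,\underline{n})\to s\ \underline{n}\ (\mathsf{nrec}\ r\ s\ \underline{n})$; ($\mu\mathbb{N}$) $\mathsf{nrec}\ r\ s\ (\mu\alpha.c)\to\mu\alpha.c[\alpha:=\alpha(\mathsf{nrec}\ r\ s\ \Box)]$; $=$ is its reflexive–symmetric–transitive closure. Gödel's T ($\lambda\mathrm{T}$) has terms $t ::= x\mid\lambda x{:}\rho.r\mid ts\mid 0\mid\mathsf{S}\,t\mid\mathsf{nrec}_\rho\ r\ s\ t$, reduction the compatible closure of $(\lambda x.t)r\to t[x:=r]$, $\mathsf{nrec}\ r\ s\ 0\to r$, $\mathsf{nrec}\ r\ s\ (\mathsf{S}\,t)\to s\ t\ (\mathsf{nrec}\ r\ s\ t)$, and conversion $=$ its reflexive–symmetric–transitive closure. CPS-translation: for $\lambda\mathrm{T}$-terms, $t\circ r:=\lambda k.t(\lambda l.l\,r\,k)$ and $\overline{t}:=\lambda k.k\,t$ (fresh $k,l$). To each $\mu$-variable $\alpha$ associate a fresh $\lambda$-variable $k_\alpha$. The translation is: $x^*:=\lambda k.xk$; $(\lambda x.t)^*:=\lambda k.k(\lambda x.t^* )$; $(tr)^*:=t^*\circ r^*$; $0^*:=\overline{0}$; $(\mathsf{S}\,t)^*:=\lambda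 k.t^*(\lambda l.k(\mathsf{S}\,l))$; $(\mathsf{nrec}_\rho\ r\ s\ t)^*:=\lambda k.t^*(\lambda l.\mathsf{nrec}\ r^*\ s'\ l\ k)$ where $s':=\lambda x p.(s^*\circ\overline{x})\circ p$; $(\mu\alpha.c)^*:=\lambda k_\alpha.c^*$; $([\alpha]t)^*:=t^*k_\alpha$. *)

(* Syntax of lambda-mu-T and Goedel's T with
   de Bruijn indices (two separate index spaces for lambda- and mu-variables
   in lambda-mu-T), so terms are identified up to alpha-equivalence. *)
From Stdlib Require Import Relations Arith.

Definition scons {A : Type} (x : A) (f : nat -> A) (n : nat) : A :=
  match n with 0 => x | S m => f m end.

(* var x : lambda-variable; lam t binds lambda-variable 0 in t;
   mu c binds mu-variable 0 in c; named a t is the command [a]t. *)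
Inductive tm : Type :=
  | var (x : nat)
  | lam (t : tm)
  | app (t s : tm)
  | mu (c : cmd)
  | zero
  | succ (t : tm)
  | nrec (r s t : tm)
with cmd : Type :=
  | named (a : nat) (t : tm).

Definition upr (f : nat -> nat) : nat -> nat := scons 0 (fun n => S (f n)).

Fixpoint ren (f g : nat -> nat) (t : tm) : tm :=
  match t with
  | var x => var (f x)
  | lam t => lam (ren (upr f) g t)
  | app t s => app (ren f g t) (ren f g s)
  | mu c => mu (renc f (upr g) c)
  | zero => zero
  | succ t => succ (ren f g t)
  | nrec r s t => nrec (ren f g r) (ren f g s) (ren f g t)
  end
with renc (f g : nat -> nat) (c : cmd) : cmd :=
  match c with named a t => named (g a) (ren f g t) end.

Definition ups (sigma : nat -> tm) : nat -> tm :=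
  scons (var 0) (fun n => ren S (fun k => k) (sigma n)).
Definition upm (sigma : nat -> tm) : nat -> tm :=
  fun n => ren (fun k => k) S (sigma n).

Fixpoint subst (sigma : nat -> tm) (t : tm) : tm :=
  match t with
  | var x => sigma x
  | lam t => lam (subst (ups sigma) t)
  | app t s => app (subst sigma t) (subst sigma s)
  | mu c => mu (substc (upm sigma) c)
  | zero => zero
  | succ t => succ (subst sigma t)
  | nrec r s t => nrec (subst sigma r) (subst sigma s) (subst sigma t)
  end
with substc (sigma : nat -> tm) (c : cmd) : cmd :=
  match c with named a t => named a (subst sigma t) end.

Definition subst1 (t r : tm) : tm := subst (scons r var) t.

Inductive ectx : Type :=
  | hole
  | capp (E : ectx) (t : tm)
  | csucc (E : ectx)
  | cnrec (r s : tm) (E : ectx).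

Fixpoint fill (E : ectx) (u : tm) : tm :=
  match E with
  | hole => u
  | capp E t => app (fill E u) t
  | csucc E => succ (fill E u)
  | cnrec r s E => nrec r s (fill E u)
  end.

Fixpoint renE (f g : nat -> nat) (E : ectx) : ectx :=
  match E with
  | hole => hole
  | capp E t => capp (renE f g E) (ren f g t)
  | csucc E => csucc (renE f g E)
  | cnrec r s E => cnrec (ren f g r) (ren f g s) (renE f g E)
  end.

Fixpoint ssub (a b : nat) (E : ectx) (t : tm) : tm :=
  match t with
  | var x => var x
  | lam t => lam (ssub a b (renE S (fun k => k) E) t)
  | app t s => app (ssub a b E t) (ssub a b E s)
  | mu c => mu (ssubc (S a) (S b) (renE (fun k => k) S E) c)
  | zero => zero
  | succ t => succ (ssub a b E t)
  | nrec r s t => nrec (ssub a b E r) (ssub a b E s) (ssub a b E t)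
  end
with ssubc (a b : nat) (E : ectx) (c : cmd) : cmd :=
  match c with
  | named g u =>
      if Nat.eqb g a then named b (fill E (ssub a b E u))
      else named g (ssub a b E u)
  end.

Fixpoint mocc (n : nat) (t : tm) : bool :=
  match t with
  | var _ => false
  | lam t => mocc n t
  | app t s => mocc n t || mocc n s
  | mu c => mocc_c (S n) c
  | zero => false
  | succ t => mocc n t
  | nrec r s t => mocc n r || mocc n s || mocc n t
  end
with mocc_c (n : nat) (c : cmd) : bool :=
  match c with named g u => Nat.eqb g n || mocc n u end.

Fixpoint num (n : nat) : tm :=
  match n with 0 => zero | S m => succ (num m) end.

Definition idn : nat -> nat := fun k => k.

Inductive step : tm -> tm -> Prop :=
  | st_beta t r : step (app (lam t) r) (subst1 t r)
  | st_muS c : step (succ (mu c)) (mu (ssubc 0 0 (csucc hole) c))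
  | st_muR c s : step (app (mu c) s) (mu (ssubc 0 0 (capp hole (ren idn S s)) c))
  | st_mueta t : mocc 0 t = false -> step (mu (named 0 t)) (ren idn Nat.pred t)
  | st_zero r s : step (nrec r s zero) r
  | st_S r s n : step (nrec r s (succ (num n)))
                      (app (app s (num n)) (nrec r s (num n)))
  | st_muN r s c : step (nrec r s (mu c))
                      (mu (ssubc 0 0 (cnrec (ren idn S r) (ren idn S s) hole) c))
  | st_lam t t' : step t t' -> step (lam t) (lam t')
  | st_appl t t' s : step t t' -> step (app t s) (app t' s)
  | st_appr t s s' : step s s' -> step (app t s) (app t s')
  | st_mu c c' : stepc c c' -> step (mu c) (mu c')
  | st_succ t t' : step t t' -> step (succ t) (succ t')
  | st_nrec1 r r' s t : step r r' -> step (nrec r s t) (nrec r' s t)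
  | st_nrec2 r s s' t : step s s' -> step (nrec r s t) (nrec r s' t)
  | st_nrec3 r s t t' : step t t' -> step (nrec r s t) (nrec r s t')
with stepc : cmd -> cmd -> Prop :=
  | st_mui a c : stepc (named a (mu c)) (renc idn Nat.pred (ssubc 0 (S a) hole c))
  | st_named a t t' : step t t' -> stepc (named a t) (named a t').

Definition conv : tm -> tm -> Prop := clos_refl_sym_trans tm step.

Inductive ttm : Type :=
  | tvar (x : nat)
  | tlam (t : ttm)
  | tapp (t s : ttm)
  | tzero
  | tsucc (t : ttm)
  | tnrec (r s t : ttm).

Fixpoint tren (f : nat -> nat) (t : ttm) : ttm :=
  match t with
  | tvar x => tvar (f x)
  | tlam t => tlam (tren (upr f) t)
  | tapp t s => tapp (tren f t) (tren f s)
  | tzero => tzero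
  | tsucc t => tsucc (tren f t)
  | tnrec r s t => tnrec (tren f r) (tren f s) (tren f t)
  end.

Definition tups (sigma : nat -> ttm) : nat -> ttm :=
  scons (tvar 0) (fun n => tren S (sigma n)).

Fixpoint tsubst (sigma : nat -> ttm) (t : ttm) : ttm :=
  match t with
  | tvar x => sigma x
  | tlam t => tlam (tsubst (tups sigma) t)
  | tapp t s => tapp (tsubst sigma t) (tsubst sigma s)
  | tzero => tzero
  | tsucc t => tsucc (tsubst sigma t)
  | tnrec r s t => tnrec (tsubst sigma r) (tsubst sigma s) (tsubst sigma t)
  end.

Inductive tstep : ttm -> ttm -> Prop :=
  | ts_beta t r : tstep (tapp (tlam t) r) (tsubst (scons r tvar) t)
  | ts_zero r s : tstep (tnrec r s tzero) r
  | ts_S r s t : tstep (tnrec r s (tsucc t)) (tapp (tapp s t) (tnrec r s t))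
  | ts_lam t t' : tstep t t' -> tstep (tlam t) (tlam t')
  | ts_appl t t' s : tstep t t' -> tstep (tapp t s) (tapp t' s)
  | ts_appr t s s' : tstep s s' -> tstep (tapp t s) (tapp t s')
  | ts_succ t t' : tstep t t' -> tstep (tsucc t) (tsucc t')
  | ts_nrec1 r r' s t : tstep r r' -> tstep (tnrec r s t) (tnrec r' s t)
  | ts_nrec2 r s s' t : tstep s s' -> tstep (tnrec r s t) (tnrec r s' t)
  | ts_nrec3 r s t t' : tstep t t' -> tstep (tnrec r s t) (tnrec r s t').

Definition tconv : ttm -> ttm -> Prop := clos_refl_sym_trans ttm tstep.

(* t o r := \k. t (\l. l r k) *)
Definition circ (t r : ttm) : ttm :=
  tlam (tapp (tren S t)
             (tlam (tapp (tapp (tvar 0) (tren (fun n => S (S n)) r)) (tvar 1)))).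

(* overline t := \k. k t *)
Definition bar (t : ttm) : ttm := tlam (tapp (tvar 0) (tren S t)).

(* cps rho kappa t : translation of t, where lambda-variable x is sent to the
   T-variable rho x and mu-variable a to the T-variable kappa a (= k_a). *)
Fixpoint cps (rho kappa : nat -> nat) (t : tm) : ttm :=
  match t with
  | var x => tlam (tapp (tvar (S (rho x))) (tvar 0))
  | lam t => tlam (tapp (tvar 0)
              (tlam (cps (scons 0 (fun n => S (S (rho n))))
                         (fun n => S (S (kappa n))) t)))
  | app t r => circ (cps rho kappa t) (cps rho kappa r)
  | mu c => tlam (cpsc (fun n => S (rho n)) (scons 0 (fun n => S (kappa n))) c)
  | zero => bar tzero
  | succ t => tlam (tapp (cps (fun n => S (rho n)) (fun n => S (kappa n)) t)
                         (tlam (tapp (tvar 1) (tsucc (tvar 0)))))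
  | nrec r s t =>
      tlam (tapp (cps (fun n => S (rho n)) (fun n => S (kappa n)) t)
             (tlam (tapp (tnrec (cps (fun n => S (S (rho n))) (fun n => S (S (kappa n))) r)
                                (tlam (tlam
                                   (circ (circ (cps (fun n => S (S (S (S (rho n)))))
                                                    (fun n => S (S (S (S (kappa n))))) s)
                                               (bar (tvar 1)))
                                         (tvar 0))))
                                (tvar 0))
                         (tvar 1))))
  end
with cpsc (rho kappa : nat -> nat) (c : cmd) : ttm :=
  match c with named a t => tapp (cps rho kappa t) (tvar (kappa a)) end.

(* t^* : lambda-variable x is named 2x, and k_a is named 2a+1 in T
   (so all the k_a are distinct and distinct from the lambda-variables). *)
Definition star (t : tm) : ttm := cps (fun x => 2 * x) (fun a => S (2 * a)) t.

(* The translation is defined relative to two environments: rho sends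
   lambda-variables and kappa sends mu-variables (the continuation variables
   k_alpha) to variables of T; t^* is the instance rho x = 2x, kappa a = 2a+1.
   We show that every one-step reduction t -> t' (and c -> c' on commands)
   yields cps rho kappa t = cps rho kappa t' in T for ALL environments; the
   theorem then follows by induction on the equivalence closure. *)
From Stdlib Require Import Relations Arith FunctionalExtensionality.

Arguments circ : simpl never.
Arguments bar : simpl never.

(** * 1. Substitution and conversion in Goedel's T *)

Lemma tren_tren f g t : tren f (tren g t) = tren (fun n => f (g n)) t.
Proof.
  revert f g; induction t; intros; simpl; f_equal; auto.
  rewrite IHt. f_equal. extensionality n; destruct n; reflexivity.
Qed.

Lemma tsubst_tren s f t : tsubst s (tren f t) = tsubst (fun n => s (f n)) t.
Proof.
  revert s f; induction t; intros; simpl; f_equal; auto.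
  rewrite IHt. f_equal. extensionality n; destruct n; reflexivity.
Qed.

Lemma tren_tsubst f s t : tren f (tsubst s t) = tsubst (fun n => tren f (s n)) t.
Proof.
  revert s f; induction t; intros; simpl; f_equal; auto.
  rewrite IHt. f_equal. extensionality n; destruct n; simpl; try reflexivity.
  unfold tups; simpl. rewrite !tren_tren. reflexivity.
Qed.

Lemma tsubst_tsubst s r t :
  tsubst s (tsubst r t) = tsubst (fun n => tsubst s (r n)) t.
Proof.
  revert s r; induction t; intros; simpl; f_equal; auto.
  rewrite IHt. f_equal. extensionality n; destruct n; simpl; try reflexivity.
  rewrite tsubst_tren, tren_tsubst. reflexivity.
Qed.

Lemma tsubst_tvar t : tsubst tvar t = t.
Proof.
  induction t; simpl; f_equal; auto.
  replace (tups tvar) with tvar; auto.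
  extensionality n; destruct n; reflexivity.
Qed.

(* Renamings are substitutions, so facts about tsubst transfer to tren. *)
Lemma tren_as_tsubst f t : tren f t = tsubst (fun n => tvar (f n)) t.
Proof.
  revert f; induction t; intros; simpl; f_equal; auto.
  rewrite IHt. f_equal. extensionality n; destruct n; reflexivity.
Qed.

Lemma tsubst_beta_weaken K A : tsubst (scons K tvar) (tren S A) = A.
Proof. rewrite tsubst_tren. apply tsubst_tvar. Qed.

Lemma tsubst_beta_comm s K F :
  tsubst s (tsubst (scons K tvar) F)
  = tsubst (scons (tsubst s K) tvar) (tsubst (tups s) F).
Proof.
  rewrite !tsubst_tsubst. f_equal. extensionality n; destruct n; cbn; auto.
  rewrite tsubst_tren. cbn. symmetry; apply tsubst_tvar.
Qed.

Lemma tstep_tsubst t t' : tstep t t' -> forall s, tstep (tsubst s t) (tsubst s t').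
Proof.
  induction 1; intros; simpl; try (constructor; auto; fail).
  rewrite tsubst_beta_comm. constructor.
Qed.

Lemma tconv_map (F : ttm -> ttm) :
  (forall a b, tstep a b -> tstep (F a) (F b)) ->
  forall a b, tconv a b -> tconv (F a) (F b).
Proof.
  intros HF a b; unfold tconv; induction 1.
  - apply rst_step, HF; assumption.
  - apply rst_refl.
  - apply rst_sym; assumption.
  - eapply rst_trans; eassumption.
Qed.

Lemma tconv_tsubst t t' : tconv t t' -> forall s, tconv (tsubst s t) (tsubst s t').
Proof. intros H s; apply (tconv_map (tsubst s)); [intros; apply tstep_tsubst |]; assumption. Qed.

Lemma tconv_tren f t t' : tconv t t' -> tconv (tren f t) (tren f t').
Proof. intros; rewrite !tren_as_tsubst; apply tconv_tsubst; auto. Qed.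

Lemma tconv_of_eq a b : a = b -> tconv a b.
Proof. intros ->; apply rst_refl. Qed.

Lemma tconv_beta t r u : tsubst (scons r tvar) t = u -> tconv (tapp (tlam t) r) u.
Proof. intros <-; apply rst_step; constructor. Qed.

Lemma tconv_lam t t' : tconv t t' -> tconv (tlam t) (tlam t').
Proof. apply (tconv_map tlam); constructor; assumption. Qed.
Lemma tconv_appl t t' s : tconv t t' -> tconv (tapp t s) (tapp t' s).
Proof. apply (tconv_map (fun x => tapp x s)); constructor; assumption. Qed.
Lemma tconv_appr t s s' : tconv s s' -> tconv (tapp t s) (tapp t s').
Proof. apply (tconv_map (tapp t)); constructor; assumption. Qed.

Lemma tconv_app t t' s s' :
  tconv t t' -> tconv s s' -> tconv (tapp t s) (tapp t' s').
Proof. intros; eapply rst_trans; [apply tconv_appl | apply tconv_appr]; eauto. Qed.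

Lemma tconv_nrec r r' s s' t t' :
  tconv r r' -> tconv s s' -> tconv t t' -> tconv (tnrec r s t) (tnrec r' s' t').
Proof.
  intros Hr Hs Ht. eapply rst_trans; [|eapply rst_trans].
  - apply (tconv_map (fun x => tnrec x s t)); [constructor; assumption | exact Hr].
  - apply (tconv_map (fun x => tnrec r' x t)); [constructor; assumption | exact Hs].
  - apply (tconv_map (tnrec r' s')); [constructor; assumption | exact Ht].
Qed.

(* eta for a syntactic abstraction follows from beta. *)
Lemma tconv_eta_lam B : tconv (tlam (tapp (tren S (tlam B)) (tvar 0))) (tlam B).
Proof.
  apply tconv_lam. simpl. apply tconv_beta. rewrite tsubst_tren.
  rewrite <- (tsubst_tvar B) at 2. f_equal.
  extensionality n; destruct n; reflexivity.
Qed.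

Lemma circ_tsubst s a b : tsubst s (circ a b) = circ (tsubst s a) (tsubst s b).
Proof.
  unfold circ; simpl. f_equal. f_equal.
  - rewrite tsubst_tren, tren_tsubst; reflexivity.
  - f_equal; f_equal; f_equal. rewrite tsubst_tren, tren_tsubst. f_equal.
    extensionality n; simpl. rewrite tren_tren; reflexivity.
Qed.

Lemma bar_tsubst s a : tsubst s (bar a) = bar (tsubst s a).
Proof. unfold bar; simpl. rewrite tsubst_tren, tren_tsubst; reflexivity. Qed.

Lemma circ_tren f a b : tren f (circ a b) = circ (tren f a) (tren f b).
Proof. rewrite !tren_as_tsubst; apply circ_tsubst. Qed.

Lemma bar_tren f a : tren f (bar a) = bar (tren f a).
Proof. rewrite !tren_as_tsubst; apply bar_tsubst. Qed.

Lemma tconv_circ a a' b b' :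
  tconv a a' -> tconv b b' -> tconv (circ a b) (circ a' b').
Proof.
  intros; unfold circ. apply tconv_lam, tconv_app; [apply tconv_tren; auto |].
  apply tconv_lam, tconv_appl, tconv_appr, tconv_tren; auto.
Qed.

(** * 2. Syntactic properties of the translation *)

Scheme tm_ind2 := Induction for tm Sort Prop
  with cmd_ind2 := Induction for cmd Sort Prop.
Combined Scheme tm_cmd_ind from tm_ind2, cmd_ind2.

(* Discharges the side conditions of cps_vsub for environments shifted under
   binders: case on the variable and use the hypotheses on the unshifted
   environments. *)
Ltac env_shift := let x := fresh "x" in intro x; destruct x; simpl;
  repeat match goal with H : forall x, _ = _ |- _ => rewrite H end; reflexivity.

Lemma cps_vsub_mutual :
  (forall t rho kappa s f g,
     (forall x, s (rho x) = tvar (f x)) -> (forall a, s (kappa a) = tvar (g a)) ->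
     tsubst s (cps rho kappa t) = cps f g t) /\
  (forall c rho kappa s f g,
     (forall x, s (rho x) = tvar (f x)) -> (forall a, s (kappa a) = tvar (g a)) ->
     tsubst s (cpsc rho kappa c) = cpsc f g c).
Proof.
  apply tm_cmd_ind; intros; cbn.
  - rewrite H; reflexivity.
  - erewrite H; [reflexivity | env_shift | env_shift].
  - rewrite circ_tsubst; erewrite H, H0; eauto.
  - erewrite H; [reflexivity | env_shift | env_shift].
  - rewrite bar_tsubst; reflexivity.
  - erewrite H; [reflexivity | env_shift | env_shift].
  - rewrite circ_tsubst, circ_tsubst, bar_tsubst.
    erewrite H, H0, H1; [reflexivity | env_shift ..].
  - rewrite H1. erewrite H; eauto.
Qed.

Lemma cps_vsub t rho kappa s f g :
  (forall x, s (rho x) = tvar (f x)) -> (forall a, s (kappa a) = tvar (g a)) ->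
  tsubst s (cps rho kappa t) = cps f g t.
Proof. apply cps_vsub_mutual. Qed.
Lemma cpsc_vsub c rho kappa s f g :
  (forall x, s (rho x) = tvar (f x)) -> (forall a, s (kappa a) = tvar (g a)) ->
  tsubst s (cpsc rho kappa c) = cpsc f g c.
Proof. apply cps_vsub_mutual. Qed.

Lemma cps_tren h t rho kappa :
  tren h (cps rho kappa t) = cps (fun n => h (rho n)) (fun n => h (kappa n)) t.
Proof. rewrite tren_as_tsubst. apply cps_vsub; reflexivity. Qed.
Lemma cpsc_tren h c rho kappa :
  tren h (cpsc rho kappa c) = cpsc (fun n => h (rho n)) (fun n => h (kappa n)) c.
Proof. rewrite tren_as_tsubst. apply cpsc_vsub; reflexivity. Qed.

Lemma cps_ren_mutual :
  (forall t rho kappa f g, cps rho kappa (ren f g t)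
     = cps (fun n => rho (f n)) (fun n => kappa (g n)) t) /\
  (forall c rho kappa f g, cpsc rho kappa (renc f g c)
     = cpsc (fun n => rho (f n)) (fun n => kappa (g n)) c).
Proof.
  apply tm_cmd_ind; intros; cbn;
    try rewrite H; try rewrite H0; try rewrite H1; try reflexivity.
  - f_equal; f_equal; f_equal; f_equal; extensionality n; destruct n; reflexivity.
  - f_equal; f_equal; extensionality n; destruct n; reflexivity.
Qed.

Lemma cps_ren t rho kappa f g :
  cps rho kappa (ren f g t) = cps (fun n => rho (f n)) (fun n => kappa (g n)) t.
Proof. apply cps_ren_mutual. Qed.
Lemma cpsc_ren c rho kappa f g :
  cpsc rho kappa (renc f g c) = cpsc (fun n => rho (f n)) (fun n => kappa (g n)) c.
Proof. apply cps_ren_mutual. Qed.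

Lemma cps_mocc_mutual :
  (forall t rho kappa kappa', (forall n, mocc n t = true -> kappa n = kappa' n) ->
     cps rho kappa t = cps rho kappa' t) /\
  (forall c rho kappa kappa', (forall n, mocc_c n c = true -> kappa n = kappa' n) ->
     cpsc rho kappa c = cpsc rho kappa' c).
Proof.
  apply tm_cmd_ind; intros; cbn in *; try reflexivity.
  - f_equal; f_equal; f_equal; apply H; intros; f_equal; auto.
  - rewrite (H rho kappa kappa'), (H0 rho kappa kappa'); auto;
      intros n Hn; apply H1; rewrite Hn; auto using Bool.orb_true_r.
  - f_equal; apply H; intros [|n] Hn; cbn; auto.
  - f_equal; f_equal; apply H; intros; f_equal; auto.
  - rewrite (H (fun n => S (S (rho n))) (fun n => S (S (kappa n)))
               (fun n => S (S (kappa' n)))),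
      (H0 (fun n => S (S (S (S (rho n))))) (fun n => S (S (S (S (kappa n)))))
          (fun n => S (S (S (S (kappa' n)))))),
      (H1 (fun n => S (rho n)) (fun n => S (kappa n)) (fun n => S (kappa' n)));
      auto; intros n Hn; rewrite (H2 n); auto; rewrite Hn, ?Bool.orb_true_r; reflexivity.
  - f_equal.
    + apply H; intros n Hn; apply H0; rewrite Hn; apply Bool.orb_true_r.
    + f_equal; apply H0; rewrite Nat.eqb_refl; reflexivity.
Qed.

Lemma cps_is_lam t rho kappa : exists B, cps rho kappa t = tlam B.
Proof. destruct t; cbn; eexists; reflexivity. Qed.

(** The translation of an application, successor or recursor passes to the
   translation of its (principal) argument a continuation built from the
   current continuation k (T-variable 1 in the frame's body, 0 outside): *)

(* lambda l. l b k, the frame for [] b *)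
Definition frame_app (b : ttm) : ttm :=
  tlam (tapp (tapp (tvar 0) (tren (fun n => S (S n)) b)) (tvar 1)).
(* lambda l. k (S l), the frame for S [] *)
Definition frame_succ : ttm := tlam (tapp (tvar 1) (tsucc (tvar 0))).
(* lambda l. nrec r^* s' l k, the frame for nrec r s [] *)
Definition frame_nrec rho kappa r s : ttm :=
  tlam (tapp (tnrec (cps (fun n => S (S (rho n))) (fun n => S (S (kappa n))) r)
                    (tlam (tlam
                       (circ (circ (cps (fun n => S (S (S (S (rho n)))))
                                        (fun n => S (S (S (S (kappa n))))) s)
                                   (bar (tvar 1)))
                             (tvar 0))))
                    (tvar 0))
             (tvar 1)).
Arguments frame_app : simpl never.
Arguments frame_succ : simpl never.
Arguments frame_nrec : simpl never.

Lemma cps_app rho kappa t r :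
  cps rho kappa (app t r) = circ (cps rho kappa t) (cps rho kappa r).
Proof. reflexivity. Qed.
Lemma circ_frame a b : circ a b = tlam (tapp (tren S a) (frame_app b)).
Proof. reflexivity. Qed.
Lemma cps_succ rho kappa t : cps rho kappa (succ t) =
  tlam (tapp (cps (fun n => S (rho n)) (fun n => S (kappa n)) t) frame_succ).
Proof. reflexivity. Qed.
Lemma cps_nrec rho kappa r s t : cps rho kappa (nrec r s t) =
  tlam (tapp (cps (fun n => S (rho n)) (fun n => S (kappa n)) t)
             (frame_nrec rho kappa r s)).
Proof. reflexivity. Qed.

Lemma frame_app_tsubst s b : tsubst (tups s) (frame_app b) = frame_app (tsubst s b).
Proof.
  unfold frame_app; cbn. f_equal; f_equal; f_equal.
  rewrite tsubst_tren, tren_tsubst. f_equal.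
  extensionality n; cbn. rewrite tren_tren; reflexivity.
Qed.

Lemma frame_nrec_vsub s rho kappa f g r t :
  (forall x, s (rho x) = tvar (f x)) -> (forall a, s (kappa a) = tvar (g a)) ->
  tsubst (tups s) (frame_nrec rho kappa r t) = frame_nrec f g r t.
Proof.
  intros Hrho Hkappa. unfold frame_nrec. cbn. rewrite !circ_tsubst, bar_tsubst.
  rewrite (cps_vsub r _ _ _ (fun n => S (S (f n))) (fun n => S (S (g n))))
    by env_shift.
  rewrite (cps_vsub t _ _ _ (fun n => S (S (S (S (f n)))))
             (fun n => S (S (S (S (g n)))))) by env_shift.
  reflexivity.
Qed.

Lemma frame_nrec_ren rho kappa f g r s :
  frame_nrec rho kappa (ren f g r) (ren f g s)
  = frame_nrec (fun n => rho (f n)) (fun n => kappa (g n)) r s.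
Proof. unfold frame_nrec. rewrite !cps_ren. reflexivity. Qed.

(** * 3. Evaluation contexts and structural substitution *)

(* ctx_cont rho kappa E K is the continuation E^*(K) obtained by stacking the
   frames of E, innermost last, on top of the continuation K. *)
Fixpoint ctx_cont rho kappa (E : ectx) (K : ttm) : ttm :=
  match E with
  | hole => K
  | capp E t => ctx_cont rho kappa E (tsubst (scons K tvar) (frame_app (cps rho kappa t)))
  | csucc E => ctx_cont rho kappa E (tsubst (scons K tvar) frame_succ)
  | cnrec r s E => ctx_cont rho kappa E (tsubst (scons K tvar) (frame_nrec rho kappa r s))
  end.

Lemma ctx_cont_vsub E : forall sg rho kappa f g K,
  (forall x, sg (rho x) = tvar (f x)) -> (forall a, sg (kappa a) = tvar (g a)) ->
  tsubst sg (ctx_cont rho kappa E K) = ctx_cont f g E (tsubst sg K).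
Proof.
  induction E; intros; cbn; auto; rewrite (IHE sg rho kappa f g); auto; f_equal;
    rewrite tsubst_beta_comm; f_equal.
  - rewrite frame_app_tsubst. f_equal. apply cps_vsub; auto.
  - apply frame_nrec_vsub; auto.
Qed.

Lemma ctx_cont_tren h E rho kappa K :
  tren h (ctx_cont rho kappa E K)
  = ctx_cont (fun n => h (rho n)) (fun n => h (kappa n)) E (tren h K).
Proof. rewrite !tren_as_tsubst. apply ctx_cont_vsub; reflexivity. Qed.

Lemma ctx_cont_renE E : forall rho kappa f g K,
  ctx_cont rho kappa (renE f g E) K
  = ctx_cont (fun n => rho (f n)) (fun n => kappa (g n)) E K.
Proof.
  induction E; intros; cbn; auto; rewrite IHE; f_equal.
  - rewrite cps_ren; reflexivity.
  - rewrite frame_nrec_ren; reflexivity.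
Qed.

Lemma cps_fill E : forall rho kappa u K,
  tconv (tapp (cps rho kappa (fill E u)) K)
        (tapp (cps rho kappa u) (ctx_cont rho kappa E K)).
Proof.
  induction E; intros; cbn [fill ctx_cont].
  - apply rst_refl.
  - eapply rst_trans; [|apply IHE]. rewrite cps_app, circ_frame.
    apply tconv_beta. cbn. rewrite tsubst_beta_weaken. reflexivity.
  - eapply rst_trans; [|apply IHE]. rewrite cps_succ.
    apply tconv_beta. cbn. f_equal. apply cps_vsub; reflexivity.
  - eapply rst_trans; [|apply IHE]. rewrite cps_nrec.
    apply tconv_beta. cbn. f_equal. apply cps_vsub; reflexivity.
Qed.

Lemma mocc_ssub_mutual :
  (forall t a b, b <> a -> mocc a (ssub a b hole t) = false) /\
  (forall c a b, b <> a -> mocc_c a (ssubc a b hole c) = false).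
Proof.
  apply tm_cmd_ind; intros; cbn; auto.
  - rewrite H, H0; auto.
  - rewrite H, H0, H1; auto.
  - destruct (Nat.eqb a a0) eqn:Eq; cbn.
    + rewrite H; auto. apply Nat.eqb_neq in H0. rewrite H0. reflexivity.
    + rewrite Eq, H; auto.
Qed.

(* sg replaces k_a by E^*(k_b) and fixes every other variable of the
   environments: the T-side counterpart of the structural substitution
   [a := b E]. *)
Definition ssub_env (sg : nat -> ttm) rho kappa a b E :=
  sg (kappa a) = ctx_cont rho kappa E (tvar (kappa b)) /\
  (forall c, c <> a -> sg (kappa c) = tvar (kappa c)) /\
  (forall x, sg (rho x) = tvar (rho x)).

Lemma ssub_env_up sg rho kappa a b E : ssub_env sg rho kappa a b E ->
  ssub_env (tups sg) (fun n => S (rho n)) (fun n => S (kappa n)) a b E.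
Proof.
  intros [Ha [Hc Hx]]; split; [|split]; intros; cbn.
  - rewrite Ha, ctx_cont_tren. reflexivity.
  - rewrite Hc; auto.
  - rewrite Hx; auto.
Qed.

Lemma cps_ssub_mutual :
  (forall t a b E rho kappa sg, ssub_env sg rho kappa a b E ->
     tconv (cps rho kappa (ssub a b E t)) (tsubst sg (cps rho kappa t))) /\
  (forall c a b E rho kappa sg, ssub_env sg rho kappa a b E ->
     tconv (cpsc rho kappa (ssubc a b E c)) (tsubst sg (cpsc rho kappa c))).
Proof.
  apply tm_cmd_ind; intros.
  -
    destruct H as [_ [_ Hx]]. cbn. rewrite Hx. apply rst_refl.
  -
    cbn. apply tconv_lam, tconv_appr, tconv_lam. apply H.
    pose proof (ssub_env_up _ _ _ _ _ _ (ssub_env_up _ _ _ _ _ _ H0)) as [Ha [Hc Hx]].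
    split; [|split].
    + cbn in *. rewrite Ha, ctx_cont_renE. reflexivity.
    + intros; cbn in *. apply Hc; auto.
    + intros [|x]; cbn in *; auto.
  -
    cbn [ssub]. rewrite !cps_app, circ_tsubst. apply tconv_circ; auto.
  -
    cbn. apply tconv_lam. apply H.
    pose proof (ssub_env_up _ _ _ _ _ _ H0) as [Ha [Hc Hx]].
    split; [|split].
    + cbn in *. rewrite Ha, ctx_cont_renE. reflexivity.
    + intros [|c'] Hc'; cbn in *; auto.
    + intros x; cbn in *; auto.
  -
    apply rst_refl.
  -
    cbn [ssub]. rewrite !cps_succ. cbn [tsubst].
    apply tconv_lam, tconv_appl. apply H. apply ssub_env_up; auto.
  -
    cbn [ssub]. rewrite !cps_nrec. cbn [tsubst]. apply tconv_lam, tconv_app.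
    + apply H1. apply ssub_env_up; auto.
    + unfold frame_nrec. cbn. rewrite !circ_tsubst, bar_tsubst.
      apply tconv_lam, tconv_appl, tconv_nrec; [| |apply rst_refl].
      * apply H. do 2 apply ssub_env_up. auto.
      * apply tconv_lam, tconv_lam, tconv_circ; [|apply rst_refl].
        apply tconv_circ; [|apply rst_refl].
        apply H0. do 4 apply ssub_env_up. auto.
  - (* named: the substituted name gets the translated context *)
    cbn [ssubc]. destruct (Nat.eqb a a0) eqn:Eq.
    + apply Nat.eqb_eq in Eq; subst. destruct H0 as [Ha Hrest]. cbn. rewrite Ha.
      eapply rst_trans; [apply cps_fill|]. apply tconv_appl. apply H. split; auto.
    + apply Nat.eqb_neq in Eq. cbn. destruct H0 as [Ha [Hc Hx]]. rewrite Hc; auto.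
      apply tconv_appl, H. split; auto.
Qed.

(** * 4. Substitution, eta-expansion and numerals *)

Definition eta_exp (M : ttm) := tlam (tapp (tren S M) (tvar 0)).

Lemma eta_exp_conv M B : tconv M (tlam B) -> tconv (eta_exp M) M.
Proof.
  intros H. eapply rst_trans; [|apply rst_sym, H].
  eapply rst_trans; [|apply tconv_eta_lam].
  unfold eta_exp. apply tconv_lam, tconv_appl, tconv_tren, H.
Qed.

Lemma eta_exp_cps rho kappa u : tconv (eta_exp (cps rho kappa u)) (cps rho kappa u).
Proof.
  destruct (cps_is_lam u rho kappa) as [B HB].
  apply (eta_exp_conv _ B). rewrite HB; apply rst_refl.
Qed.

Lemma eta_cps_shift rho kappa u :
  tconv (tlam (tapp (cps (fun n => S (rho n)) (fun n => S (kappa n)) u) (tvar 0)))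
        (cps rho kappa u).
Proof. rewrite <- cps_tren. apply eta_exp_cps. Qed.

(* sg sends k_a to k'_a and the variable of x to (a term convertible with)
   the eta-expansion of the translation of sigma x: the T-side counterpart of
   the lambda-mu-T substitution sigma. *)
Definition subst_env (sg : nat -> ttm) rho kappa rho' kappa' (sigma : nat -> tm) :=
  (forall a, sg (kappa a) = tvar (kappa' a)) /\
  (forall x, tconv (eta_exp (sg (rho x))) (cps rho' kappa' (sigma x))).

Lemma subst_env_up sg rho kappa rho' kappa' sigma :
  subst_env sg rho kappa rho' kappa' sigma ->
  subst_env (tups sg) (fun n => S (rho n)) (fun n => S (kappa n))
            (fun n => S (rho' n)) (fun n => S (kappa' n)) sigma.
Proof.
  intros [Ha Hx]; split; intros; cbn.
  - rewrite Ha; reflexivity.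
  - rewrite <- cps_tren. eapply rst_trans; [|apply tconv_tren, Hx].
    unfold eta_exp. cbn. rewrite !tren_tren. apply rst_refl.
Qed.

Lemma cps_subst_mutual :
  (forall t rho kappa rho' kappa' sg sigma, subst_env sg rho kappa rho' kappa' sigma ->
     tconv (tsubst sg (cps rho kappa t)) (cps rho' kappa' (subst sigma t))) /\
  (forall c rho kappa rho' kappa' sg sigma, subst_env sg rho kappa rho' kappa' sigma ->
     tconv (tsubst sg (cpsc rho kappa c)) (cpsc rho' kappa' (substc sigma c))).
Proof.
  apply tm_cmd_ind; intros.
  -
    destruct H as [_ Hx]. apply Hx.
  -
    cbn. apply tconv_lam, tconv_appr, tconv_lam. apply H.
    pose proof (subst_env_up _ _ _ _ _ _ (subst_env_up _ _ _ _ _ _ H0)) as [Ha Hx].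
    split.
    + intros; cbn in *. apply Ha.
    + intros [|x]; cbn in *; [apply rst_refl | rewrite cps_ren; apply Hx].
  -
    cbn [subst]. rewrite !cps_app, circ_tsubst. apply tconv_circ; eauto.
  -
    cbn. apply tconv_lam. apply H.
    pose proof (subst_env_up _ _ _ _ _ _ H0) as [Ha Hx].
    split.
    + intros [|a]; cbn in *; auto.
    + intros x; cbn in *. unfold upm. rewrite cps_ren. apply Hx.
  -
    apply rst_refl.
  -
    cbn [subst]. rewrite !cps_succ. cbn [tsubst].
    apply tconv_lam, tconv_appl. apply H. apply subst_env_up; auto.
  -
    cbn [subst]. rewrite !cps_nrec. cbn [tsubst]. apply tconv_lam, tconv_app.
    + apply H1. apply subst_env_up; auto.
    + unfold frame_nrec. cbn. rewrite !circ_tsubst, bar_tsubst.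
      apply tconv_lam, tconv_appl, tconv_nrec; [| |apply rst_refl].
      * apply H. do 2 apply subst_env_up. auto.
      * apply tconv_lam, tconv_lam, tconv_circ; [|apply rst_refl].
        apply tconv_circ; [|apply rst_refl].
        apply H0. do 4 apply subst_env_up. auto.
  -
    cbn. destruct H0 as [Ha Hx]. rewrite Ha. apply tconv_appl, H. split; auto.
Qed.

Fixpoint tnum n := match n with 0 => tzero | S m => tsucc (tnum m) end.

Lemma tsubst_tnum s n : tsubst s (tnum n) = tnum n.
Proof. induction n; cbn; congruence. Qed.
Lemma tren_tnum f n : tren f (tnum n) = tnum n.
Proof. rewrite tren_as_tsubst; apply tsubst_tnum. Qed.

Lemma cps_num_app n : forall rho kappa K,
  tconv (tapp (cps rho kappa (num n)) K) (tapp K (tnum n)).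
Proof.
  induction n; intros.
  - apply tconv_beta. reflexivity.
  - eapply rst_trans. apply (cps_fill (csucc hole) rho kappa (num n) K).
    cbn [ctx_cont]. eapply rst_trans. apply IHn. unfold frame_succ.
    apply tconv_beta. cbn. rewrite tsubst_beta_weaken. reflexivity.
Qed.

Lemma cps_num n rho kappa : tconv (cps rho kappa (num n)) (bar (tnum n)).
Proof.
  eapply rst_trans; [apply rst_sym, eta_exp_cps|]. unfold eta_exp, bar.
  apply tconv_lam. rewrite cps_tren, tren_tnum. apply cps_num_app.
Qed.

(** * 5. The reduction rules *)

Lemma case_beta rho kappa t r :
  tconv (cps rho kappa (app (lam t) r)) (cps rho kappa (subst1 t r)).
Proof.
  eapply rst_trans; [|apply eta_cps_shift]. rewrite cps_app, circ_frame.
  apply tconv_lam. cbn.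
  eapply rst_trans; [apply tconv_beta; reflexivity|]. cbn. rewrite cps_tren.
  rewrite (cps_vsub t _ _ _ (scons 0 (fun n => S (S (rho n))))
             (fun n => S (S (kappa n)))) by env_shift.
  unfold frame_app. eapply rst_trans; [apply tconv_beta; reflexivity|].
  cbn. rewrite cps_tren.
  rewrite (cps_vsub r _ _ _ (fun n => S (rho n)) (fun n => S (kappa n))) by env_shift.
  eapply rst_trans; [apply tconv_appl, tconv_beta; reflexivity|].
  apply tconv_appl, (proj1 cps_subst_mutual). split.
  - intros a; reflexivity.
  - intros [|x]; cbn; [apply eta_exp_cps | apply rst_refl].
Qed.

(* The common shape of the three rules moving a context E under a mu:
   feeding E^*(k_0) to the abstraction over k_0 of c^* is the translation
   of c[0 := 0 E]. *)
Lemma cps_mu_ctx c rho kappa E K :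
  ctx_cont (fun n => S (rho n)) (scons 0 (fun n => S (kappa n))) E (tvar 0) = K ->
  tconv (tapp (tlam (cpsc (fun n => S (S (rho n))) (scons 0 (fun n => S (S (kappa n)))) c)) K)
        (cpsc (fun n => S (rho n)) (scons 0 (fun n => S (kappa n))) (ssubc 0 0 E c)).
Proof.
  intros HK. eapply rst_trans; [apply tconv_beta; reflexivity|]. apply rst_sym.
  eapply rst_trans;
    [apply (proj2 cps_ssub_mutual) with (sg := scons K (fun n => tvar (S n)))|].
  - split; [|split].
    + cbn. auto.
    + intros [|c'] Hc; cbn; [congruence | reflexivity].
    + reflexivity.
  - apply tconv_of_eq.
    replace (cpsc (fun n => S (S (rho n))) (scons 0 (fun n => S (S (kappa n)))) c) with
      (tren (upr S) (cpsc (fun n => S (rho n)) (scons 0 (fun n => S (kappa n))) c)).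
    + rewrite tsubst_tren. f_equal. extensionality n; destruct n; reflexivity.
    + rewrite cpsc_tren. f_equal. extensionality n; destruct n; reflexivity.
Qed.

Lemma case_muS rho kappa c :
  tconv (cps rho kappa (succ (mu c))) (cps rho kappa (mu (ssubc 0 0 (csucc hole) c))).
Proof. rewrite cps_succ. cbn [cps]. apply tconv_lam, cps_mu_ctx. reflexivity. Qed.

Lemma case_muR rho kappa c s :
  tconv (cps rho kappa (app (mu c) s))
        (cps rho kappa (mu (ssubc 0 0 (capp hole (ren idn S s)) c))).
Proof.
  rewrite cps_app, circ_frame. cbn [cps tren]. apply tconv_lam.
  replace (tren (upr S) (cpsc (fun n => S (rho n)) (scons 0 (fun n => S (kappa n))) c))
    with (cpsc (fun n => S (S (rho n))) (scons 0 (fun n => S (S (kappa n)))) c).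
  - apply cps_mu_ctx. cbn [ctx_cont]. rewrite cps_ren. unfold frame_app. cbn.
    rewrite !cps_tren.
    rewrite (cps_vsub s _ _ _ (fun n => S (S (rho n))) (fun n => S (S (kappa n))))
      by env_shift.
    reflexivity.
  - rewrite cpsc_tren. f_equal. extensionality n; destruct n; reflexivity.
Qed.

Lemma case_muN rho kappa r s c :
  tconv (cps rho kappa (nrec r s (mu c)))
        (cps rho kappa (mu (ssubc 0 0 (cnrec (ren idn S r) (ren idn S s) hole) c))).
Proof.
  rewrite cps_nrec. cbn [cps]. apply tconv_lam, cps_mu_ctx. cbn [ctx_cont].
  rewrite frame_nrec_ren. unfold frame_nrec; cbn. rewrite !circ_tsubst, bar_tsubst.
  rewrite (cps_vsub r _ _ _ (fun n => S (S (rho n))) (fun n => S (S (kappa n))))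
    by env_shift.
  rewrite (cps_vsub s _ _ _ (fun n => S (S (S (S (rho n)))))
             (fun n => S (S (S (S (kappa n)))))) by env_shift.
  reflexivity.
Qed.

Lemma case_mueta rho kappa t : mocc 0 t = false ->
  tconv (cps rho kappa (mu (named 0 t))) (cps rho kappa (ren idn Nat.pred t)).
Proof.
  intros Hm. eapply rst_trans; [|apply eta_cps_shift]. cbn [cps cpsc].
  apply tconv_lam, tconv_of_eq.
  rewrite cps_ren. f_equal. apply (proj1 cps_mocc_mutual).
  intros [|n] Hn; [congruence | reflexivity].
Qed.

Lemma case_mui rho kappa a c :
  tconv (cpsc rho kappa (named a (mu c)))
        (cpsc rho kappa (renc idn Nat.pred (ssubc 0 (S a) hole c))).
Proof.
  cbn [cpsc cps]. eapply rst_trans; [apply tconv_beta; reflexivity|].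
  rewrite (cpsc_vsub c _ _ _ rho (scons (kappa a) kappa)) by env_shift.
  rewrite cpsc_ren.
  rewrite ((proj2 cps_mocc_mutual) _ rho (fun n => kappa (Nat.pred n))
             (scons (kappa a) kappa)).
  - apply rst_sym. eapply rst_trans.
    + apply (proj2 cps_ssub_mutual) with (sg := tvar). split; [|split]; reflexivity.
    + rewrite tsubst_tvar. apply rst_refl.
  - intros [|n] Hn; [|reflexivity].
    rewrite (proj2 mocc_ssub_mutual) in Hn; [discriminate | auto].
Qed.

Lemma case_zero rho kappa r s : tconv (cps rho kappa (nrec r s zero)) (cps rho kappa r).
Proof.
  eapply rst_trans; [|apply eta_cps_shift]. rewrite cps_nrec. apply tconv_lam.
  cbn [cps]. unfold bar. eapply rst_trans; [apply tconv_beta; reflexivity|]. cbn.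
  unfold frame_nrec. eapply rst_trans; [apply tconv_beta; reflexivity|]. cbn.
  apply tconv_appl. eapply rst_trans; [apply rst_step, ts_zero|].
  apply tconv_of_eq. apply cps_vsub; env_shift.
Qed.

(* The T-recursor r^* s' n that the translation of nrec r s (underline n)
   computes. *)
Definition nrec_num rho kappa r s n := tnrec (cps rho kappa r)
  (tlam (tlam (circ (circ (cps (fun n => S (S (rho n))) (fun n => S (S (kappa n))) s)
                          (bar (tvar 1)))
                    (tvar 0))))
  (tnum n).

Lemma nrec_num_succ rho kappa r s n :
  tconv (nrec_num rho kappa r s (S n))
        (circ (circ (cps rho kappa s) (bar (tnum n))) (nrec_num rho kappa r s n)).
Proof.
  unfold nrec_num. eapply rst_trans; [apply rst_step, ts_S|].
  eapply rst_trans; [apply tconv_appl, tconv_beta; reflexivity|].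
  apply tconv_beta. cbn [tsubst].
  rewrite !circ_tsubst, !bar_tsubst. cbn [tsubst tups scons]. fold (tnum n).
  rewrite (cps_vsub s _ _ _ (fun n => S (rho n)) (fun n => S (kappa n))) by env_shift.
  rewrite (cps_vsub s _ _ _ rho kappa), tsubst_beta_weaken by reflexivity.
  reflexivity.
Qed.

Lemma nrec_num_is_lam rho kappa r s n : exists B, tconv (nrec_num rho kappa r s n) (tlam B).
Proof.
  destruct n as [|n].
  - destruct (cps_is_lam r rho kappa) as [B HB]. exists B. rewrite <- HB.
    apply rst_step, ts_zero.
  - eexists. apply nrec_num_succ.
Qed.

Lemma cps_nrec_num rho kappa r s n :
  tconv (cps rho kappa (nrec r s (num n))) (nrec_num rho kappa r s n).
Proof.
  destruct (nrec_num_is_lam rho kappa r s n) as [B HB].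
  eapply rst_trans; [|apply (eta_exp_conv _ B HB)].
  rewrite cps_nrec. unfold eta_exp. apply tconv_lam.
  eapply rst_trans; [apply cps_num_app|]. unfold frame_nrec.
  apply tconv_beta. cbn [tsubst scons].
  rewrite !circ_tsubst, bar_tsubst.
  rewrite (cps_vsub r _ _ _ (fun n => S (rho n)) (fun n => S (kappa n))) by env_shift.
  rewrite (cps_vsub s _ _ _ (fun n => S (S (S (rho n)))) (fun n => S (S (S (kappa n)))))
    by env_shift.
  unfold nrec_num. cbn [tren]. rewrite !circ_tren, bar_tren, !cps_tren, tren_tnum.
  reflexivity.
Qed.

Lemma case_S rho kappa r s n :
  tconv (cps rho kappa (nrec r s (succ (num n))))
        (cps rho kappa (app (app s (num n)) (nrec r s (num n)))).
Proof.
  eapply rst_trans; [apply (cps_nrec_num rho kappa r s (S n))|].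
  eapply rst_trans; [apply nrec_num_succ|].
  rewrite !cps_app. apply tconv_circ; [apply tconv_circ |].
  - apply rst_refl.
  - apply rst_sym, cps_num.
  - apply rst_sym, cps_nrec_num.
Qed.

(** * 6. Soundness of the translation *)

Scheme step_ind2 := Induction for step Sort Prop
  with stepc_ind2 := Induction for stepc Sort Prop.
Combined Scheme step_stepc_ind from step_ind2, stepc_ind2.

(* Every one-step reduction is mapped to a conversion, for all environments:
   the redex rules by the lemmas above, the compatible closure because the
   translation is built from T-constructors that respect conversion. *)
Lemma cps_step_mutual :
  (forall t t', step t t' ->
     forall rho kappa, tconv (cps rho kappa t) (cps rho kappa t')) /\
  (forall c c', stepc c c' ->
     forall rho kappa, tconv (cpsc rho kappa c) (cpsc rho kappa c')).
Proof.
  apply step_stepc_ind; intros.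
  - apply case_beta.
  - apply case_muS.
  - apply case_muR.
  - apply case_mueta; assumption.
  - apply case_zero.
  - apply case_S.
  - apply case_muN.
  - cbn. apply tconv_lam, tconv_appr, tconv_lam. auto.
  - rewrite !cps_app. apply tconv_circ; [auto | apply rst_refl].
  - rewrite !cps_app. apply tconv_circ; [apply rst_refl | auto].
  - cbn. apply tconv_lam. auto.
  - rewrite !cps_succ. apply tconv_lam, tconv_appl. auto.
  - rewrite !cps_nrec. apply tconv_lam, tconv_appr. unfold frame_nrec.
    apply tconv_lam, tconv_appl, tconv_nrec; [auto | apply rst_refl ..].
  - rewrite !cps_nrec. apply tconv_lam, tconv_appr. unfold frame_nrec.
    apply tconv_lam, tconv_appl, tconv_nrec; try apply rst_refl.
    apply tconv_lam, tconv_lam, tconv_circ; [|apply rst_refl].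
    apply tconv_circ; [auto | apply rst_refl].
  - rewrite !cps_nrec. apply tconv_lam, tconv_appl. auto.
  - apply case_mui.
  - cbn. apply tconv_appl. auto.
Qed.

Theorem mainTheorem6 (t1 t2 : tm) : conv t1 t2 -> tconv (star t1) (star t2).
Proof.
  unfold conv, star. induction 1.
  - apply (proj1 cps_step_mutual); assumption.
  - apply rst_refl.
  - apply rst_sym; assumption.
  - eapply rst_trans; eassumption.
Qed.
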